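(* For all integers $n,f,k$ with $1\le f\le n-1$ and $1\le k\le n$, the task $k\text{-TAg}(n+1,f)$ is $C^*$-reducible to $k\text{-TAg}(n,f)$. (The algorithm of the preceding $C^*$-reduction, with $\Pi=\{1,\dots,n+1\}$, $\Pi_i=\Pi\setminus\{i\}$, in which each process $i$ queries the oracles $\mathcal O.k\text{-TAg}(\Pi_l,f)$, $l\ne i$, in order with its initial value and broadcasts each answer, but finally decides $\min_l w_l$ instead of $\max_l w_l$, solves $k\text{-TAg}(\Pi,f)$.)
   Context: Model: a finite set of processes runs an asynchronous algorithm communicating by reliable message passing with unbounded delays and speeds; processes fail only by crashing. Time is $\mathcal T=\mathbb N$; a failure pattern $F$ for $\Pi$ is a nondecreasing map $\mathcal T\to2^\Pi$, $Faulty(F)=\bigcup_tF(t)$. A binary agreement problem $P$ for $\Pi$ maps each $(F,\vec V)$, $\vec V\in\{0,1\}^\Pi$, to a nonempty $P(F,\vec V)\subseteq\{0,1\}$; a task is $T=(P,f)$. An algorithm solves $T$ if in every run with $|Faulty(F)|\le f$ and initial values $\vec V$: every correct process eventually decides, decisions are irrevocable, no two processes decide differently, and decisions lie in $P(F,\vec V)$. $k\text{-TAg}_\Pi(F,\vec V)=\{0\}$ if at least $k$ entries of $\vec V$ are $0$; $=\{1\}$ if $\vec V$ is all-ones and $|Faulty(F)|\le k-1$; $=\{0,1\}$ otherwise; $k\text{-TAg}(\Pi,f)=(k\text{-TAg}_\Pi,f)$; $k\text{-TAg}(n,f)=k\text{-TAg}(\{1,\dots,n\},f)$. Oracles: for $T=(P,f)$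 on process set $\Pi'$, $\mathcal O.T$ is a black box with consultants $\Pi'$; its history is a sequence of successive consultations, in each of which every consultant may submit at most one query in $\{0,1\}$ and the oracle returns a common response $d$ with $d\in P(F,\vec V)$ for every $\vec V$ extending the partial query vector (the oracle may use the whole failure pattern, including future crashes), and every correct querier gets the response whenever at least $|\Pi'|-f$ consultants query; $\mathcal O.T$ is the most general such oracle. $C^*$-reduction: $T_1\le_{C^*}T_2$ if there is an algorithm solving $T_1$ whose processes may additionally consult any finite collection of oracles $\mathcal O.T_2^{(j)}$, each $T_2^{(j)}$ being a copy of $T_2$ whose processes are renamed into (a subset of) the processes of $T_1$. *)

From mathcomp Require Import all_boot.
From mathcomp Require Import boolp.

Set Implicit Arguments.
Unset Strict Implicit.
Unset Printing Implicit Defensive.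

(* Process set Pi = 'I_N (processes 0..N-1 play the role of 1..N).
   Time = nat.  A failure pattern maps each time to the set of processes
   crashed by that time. *)
Definition fpattern (N : nat) := nat -> {set 'I_N}.

Definition is_fpattern N (F : fpattern N) : Prop :=
  forall t t', t <= t' -> F t \subset F t'.

Definition Faulty N (F : fpattern N) : {set 'I_N} :=
  [set p | `[< exists t, p \in F t >]].

Definition correct N (F : fpattern N) (p : 'I_N) : Prop :=
  forall t, p \notin F t.

(* A binary agreement problem: (F, V) |-> subset of {0,1}
   (false = 0, true = 1). *)
Definition problem (N : nat) := fpattern N -> ('I_N -> bool) -> {set bool}.

Definition task (N : nat) := (problem N * nat)%type.

Definition kTAg (N k : nat) : problem N := fun F V =>
  if k <= #|[set p | ~~ V p]| then [set false]
  else if [forall p, V p] && (#|Faulty F| <= k.-1) then [set true]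
  else [set: bool].

Definition kTAg_task (N k f : nat) : task N := (@kTAg N k, f).

Inductive input (N m : nat) (M : Type) :=
| InNone
| InMsg of 'I_N & M
| InResp of 'I_m & bool.

Record output (N m : nat) (M : Type) := Output {
  sends : seq ('I_N * M);
  query : option ('I_m * bool) }.

Record algorithm (N m : nat) := Algorithm {
  St : Type;
  Msg : Type;
  init : 'I_N -> bool -> St;
  step : 'I_N -> St -> input N m Msg -> St * output N m Msg;
  decision : St -> option bool }.

Arguments St {N m} a.
Arguments Msg {N m} a.
Arguments init {N m} a.
Arguments step {N m} a.
Arguments decision {N m} a _.

Inductive event (m : nat) :=
| EvNone
| EvMsg of nat & nat        (* deliver the i-th message sent at time t *)
| EvResp of 'I_m & nat.     (* deliver response of consultation c of oracle j *)

Section Exec.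
Variables (N m : nat) (A : algorithm N m).
Variables (V : 'I_N -> bool)
          (sched : nat -> option ('I_N * event m))
          (resp : 'I_m -> nat -> bool).

Definition msg_of (outs : seq (option ('I_N * output N m (Msg A))))
    (t i : nat) (p : 'I_N) : option ('I_N * Msg A) :=
  match nth None outs t with
  | Some (q, o) =>
      match onth (sends o) i with
      | Some (d, msg) => if d == p then Some (q, msg) else None
      | None => None
      end
  | None => None
  end.

Definition input_of (outs : seq (option ('I_N * output N m (Msg A))))
    (p : 'I_N) (ev : event m) : input N m (Msg A) :=
  match ev with
  | EvNone => InNone _ _ _
  | EvMsg t i => match msg_of outs t i p with
                 | Some (q, msg) => InMsg _ q msg
                 | None => InNone _ _ _
                 end
  | EvResp j c => InResp _ _ j (resp j c)
  end.

Fixpoint exec (t : nat) :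
    ('I_N -> St A) * seq (option ('I_N * output N m (Msg A))) :=
  match t with
  | 0 => (fun p => init A p (V p), [::])
  | t'.+1 =>
      let: (st, outs) := exec t' in
      match sched t' with
      | None => (st, rcons outs None)
      | Some (p, ev) =>
          let: (s', o) := step A p (st p) (input_of outs p ev) in
          ((fun q => if q == p then s' else st q), rcons outs (Some (p, o)))
      end
  end.

(* state of p at time t (before the step of time t) *)
Definition state (t : nat) (p : 'I_N) : St A := (exec t).1 p.

Definition outAt (t : nat) : option ('I_N * output N m (Msg A)) :=
  nth None (exec t.+1).2 t.

Definition queries_at (t : nat) (p : 'I_N) (j : 'I_m) (b : bool) : Prop :=
  exists o, outAt t = Some (p, o) /\ query o = Some (j, b).

(* number of queries of p to oracle j strictly before time t *)
Fixpoint nqueries (p : 'I_N) (j : 'I_m) (t : nat) : nat :=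
  match t with
  | 0 => 0
  | t'.+1 => nqueries p j t' +
      (if outAt t' is Some (q, o) then
         (q == p) && (if query o is Some (j', _) then j' == j else false)
       else false)
  end.

(* Process p submits query b in consultation c of oracle j
   (the c-th query of p to j belongs to the c-th consultation). *)
Definition in_consult (j : 'I_m) (c : nat) (p : 'I_N) (b : bool) : Prop :=
  exists t, queries_at t p j b /\ nqueries p j t = c.

End Exec.

(* Admissible runs of A using copies of T2 = (P2, f2) (on 'I_n2) renamed
   by ren j : 'I_n2 -> 'I_N, with failure pattern F and initial values V. *)
Definition admissible (N n2 m : nat) (T2 : task n2)
    (ren : 'I_m -> 'I_n2 -> 'I_N) (A : algorithm N m)
    (F : fpattern N) (V : 'I_N -> bool)
    (sched : nat -> option ('I_N * event m)) (resp : 'I_m -> nat -> bool)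
    : Prop :=
  let P2 := T2.1 in let f2 := T2.2 in
  let Fj := fun j t => [set x | ren j x \in F t] in
  (* V' extends the (final) query vector of consultation c of oracle j *)
  let extends := fun j c (V' : 'I_n2 -> bool) =>
      forall x b, in_consult A V sched resp j c (ren j x) b -> V' x = b in
  let valid := fun j c d =>
      forall V', extends j c V' -> d \in P2 (Fj j) V' in
  [/\
   (forall t p ev, sched t = Some (p, ev) -> p \notin F t) /\
   (forall p, correct F p -> forall t, exists t' ev, t <= t' /\ sched t' = Some (p, ev)),
   (forall t p t0 i, sched t = Some (p, EvMsg m t0 i) ->
      [/\ t0 < t,
          (exists q o msg, outAt A V sched resp t0 = Some (q, o) /\
                           onth (sends o) i = Some (p, msg)) &
          (forall t1, t1 < t -> sched t1 <> Some (p, EvMsg m t0 i))]),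
   (forall t0 q o i p msg, outAt A V sched resp t0 = Some (q, o) ->
      onth (sends o) i = Some (p, msg) -> correct F p ->
      exists t, sched t = Some (p, EvMsg m t0 i)),
   (forall t p j c, sched t = Some (p, EvResp j c) ->
      [/\ exists t0 b, t0 < t /\ queries_at A V sched resp t0 p j b /\
                       nqueries A V sched resp p j t0 = c,
          (forall t1, t1 < t -> sched t1 <> Some (p, EvResp j c)) &
          valid j c (resp j c)]) &
   (forall j c,
      (exists S : {set 'I_n2}, n2 - f2 <= #|S| /\
         forall x, x \in S -> exists b, in_consult A V sched resp j c (ren j x) b) ->
      (exists d, valid j c d) ->
      forall x b, in_consult A V sched resp j c (ren j x) b -> correct F (ren j x) ->
      exists t, sched t = Some (ren j x, EvResp j c))].

Definition solves_with (N n2 m : nat) (T1 : task N) (T2 : task n2)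
    (ren : 'I_m -> 'I_n2 -> 'I_N) (A : algorithm N m) : Prop :=
  forall (F : fpattern N) (V : 'I_N -> bool)
         (sched : nat -> option ('I_N * event m)) (resp : 'I_m -> nat -> bool),
    is_fpattern F -> #|Faulty F| <= T1.2 ->
    admissible T2 ren A F V sched resp ->
    let dec t p := decision A (state A V sched resp t p) in
    [/\
        (forall p, correct F p -> exists t b, dec t p = Some b),
        (forall p t t' b, t <= t' -> dec t p = Some b -> dec t' p = Some b),
        (forall p q t t' b b', dec t p = Some b -> dec t' q = Some b' -> b = b') &
        (forall p t b, dec t p = Some b -> b \in T1.1 F V)].

Definition Cstar_reducible (N n2 : nat) (T1 : task N) (T2 : task n2) : Prop :=
  exists (m : nat) (ren : 'I_m -> 'I_n2 -> 'I_N),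
    (forall j, injective (ren j)) /\
    exists A : algorithm N m, solves_with T1 T2 ren A.

(* Oracle [j] runs k-TAg on the processes other than [j], each process querying it
   with its own initial value; every answer [w_j] is broadcast and a process decides
   [min_j w_j] once it knows all of them, so agreement is immediate.  Validity: if at
   least [k] initial values are [0] (and [k <= n]), then removing a process with value
   [1] (or any process, if there is none) leaves [k] zeros, so some [w_j = 0]; if all
   values are [1] with fewer than [k] crashes, the same holds for each restriction, so
   every [w_j = 1].  Termination: since [f < n], every oracle has a correct consultant,
   whose answer reaches everybody. *)

From mathcomp Require Import all_boot.
From mathcomp Require Import boolp.
From mathcomp Require Import zify.

Set Implicit Arguments.
Unset Strict Implicit.
Unset Printing Implicit Defensive.

Lemma card_preimset_inj (aT rT : finType) (h : aT -> rT) (B : {set rT}) :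
  injective h -> #|h @^-1: B| <= #|B|.
Proof.
by move=> h_inj; rewrite -(card_imset _ h_inj) subset_leq_card // sub_imset_pre.
Qed.

Lemma onth_index (T : eqType) (s : seq T) x : x \in s -> onth s (index x s) = Some x.
Proof. by move=> xs; rewrite onthE (nth_map x) ?index_mem // nth_index. Qed.

Lemma correctP N (F : fpattern N) p : reflect (correct F p) (p \notin Faulty F).
Proof.
rewrite inE; apply: (iffP negP) => [nF t|Cp /asboolP [t Ft]].
  by apply/negP => Ft; apply: nF; apply/asboolP; exists t.
by move: (Cp t); rewrite Ft.
Qed.

Definition lift_fpattern n (F : fpattern n.+1) (j : 'I_n.+1) : fpattern n :=
  fun t => [set x | lift j x \in F t].

Lemma Faulty_lift n (F : fpattern n.+1) j :
  Faulty (lift_fpattern F j) = lift j @^-1: Faulty F.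
Proof.
by apply/setP => x; rewrite !inE; apply/asboolP/asboolP => -[t Ft]; exists t; rewrite inE in Ft *.
Qed.

Lemma correct_lift n (F : fpattern n.+1) j x :
  correct (lift_fpattern F j) x <-> correct F (lift j x).
Proof. by split=> Cx t; have := Cx t; rewrite inE. Qed.

Lemma kTAg_falseN N k (F : fpattern N) V :
  false \notin kTAg k F V -> [forall p, V p] /\ #|Faulty F| <= k.-1.
Proof.
rewrite /kTAg; case: ifP => _; first by rewrite in_set1.
by case: ifP => [/andP[]|_]; rewrite ?in_setT.
Qed.

Lemma kTAg_trueN N k (F : fpattern N) V :
  true \notin kTAg k F V -> k <= #|[set p | ~~ V p]|.
Proof. by rewrite /kTAg; case: ifP => // _; case: ifP; rewrite ?in_set1 ?in_setT. Qed.

Lemma card_Faulty_lift n (F : fpattern n.+1) j :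
  #|Faulty (lift_fpattern F j)| <= #|Faulty F|.
Proof. by rewrite Faulty_lift card_preimset_inj //; exact: lift_inj. Qed.

Lemma zeros_lift n k (V : 'I_n.+1 -> bool) :
  k <= n -> k <= #|[set p | ~~ V p]| ->
  exists j : 'I_n.+1, k <= #|[set x : 'I_n | ~~ V (lift j x)]|.
Proof.
move=> kn kV; case: (pickP V) => [l Vl|V0]; last first.
  exists (@ord0 n); apply: leq_trans kn _; rewrite -[X in X <= _]card_ord.
  by apply: subset_leq_card; apply/subsetP => x _; rewrite inE V0.
exists l; apply: leq_trans kV _; rewrite -(card_imset _ (@lift_inj _ l)).
apply/subset_leq_card/subsetP => p; rewrite inE => Vp.
have /unlift_some [x def_p _] : l != p by apply: contraNneq Vp => <-; rewrite Vl.
by rewrite def_p imset_f // inE -def_p.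
Qed.

Lemma kTAg_forall_lift n k (F : fpattern n.+1) V (w : 'I_n.+1 -> bool) :
  0 < k <= n ->
  (forall j, w j \in kTAg k (lift_fpattern F j) (fun x => V (lift j x))) ->
  [forall j, w j] \in kTAg k F V.
Proof.
move=> /andP[k_gt0 kn] w_ok; rewrite /kTAg; case: ifP => [kV|_].
  have [j kj] := zeros_lift kn kV; move: (w_ok j); rewrite /kTAg kj in_set1.
  by move=> /eqP wj; rewrite in_set1; apply/eqP/negbTE/forallPn; exists j; rewrite wj.
case: ifP => [/andP[/forallP V1 few_faulty]|_]; last by rewrite in_setT.
rewrite in_set1; apply/eqP/forallP => j; move: (w_ok j); rewrite /kTAg.
have -> : [set x : 'I_n | ~~ V (lift j x)] = set0 by apply/setP => x; rewrite !inE V1.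
have -> : [forall x, V (lift j x)] by apply/forallP => x; exact: V1.
by rewrite cards0 leqNgt k_gt0 (leq_trans (card_Faulty_lift F j) few_faulty) in_set1 => /eqP.
Qed.

Section MinReduction.
Variable n : nat.
Local Notation N := n.+1.

Record lstate := LState {
  init_val : bool;
  nsteps : nat;
  known : 'I_N -> option bool }.

Definition learn (kn : 'I_N -> option bool) (j : 'I_N) (d : bool) : 'I_N -> option bool :=
  fun j' => if kn j' is Some e then Some e else if j' == j then Some d else None.

(* The [i]-th step queries oracle [i], including oracle [p] itself, of which [p] is not
   a consultant, so that query is ignored; every oracle answer is relayed to all. *)
Definition min_step (p : 'I_N) (s : lstate) (inp : input N N ('I_N * bool)) :
    lstate * output N N ('I_N * bool) :=
  let kn := match inp with
            | InResp j d | InMsg _ (j, d) => learn (known s) j d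
            | InNone => known s end in
  let bcast := if inp is InResp j d then [seq (q, (j, d)) | q <- enum 'I_N] else [::] in
  let qry := if nsteps s < N then Some (inord (nsteps s), init_val s) else None in
  (LState (init_val s) (nsteps s).+1 kn, Output bcast qry).

(* [min_l w_l] on [bool] is the conjunction. *)
Definition min_decision (s : lstate) : option bool :=
  if [forall j, known s j != None] then Some [forall j, known s j == Some true] else None.

Definition min_alg : algorithm N N :=
  @Algorithm N N lstate ('I_N * bool) (fun _ b => LState b 0 (fun _ => None))
    min_step min_decision.

Variables (V : 'I_N -> bool) (sched : nat -> option ('I_N * event N))
          (resp : 'I_N -> nat -> bool).

Local Notation exe := (exec min_alg V sched resp).
Local Notation state := (state min_alg V sched resp).
Local Notation out := (outAt min_alg V sched resp).
Local Notation nqueries := (nqueries min_alg V sched resp).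
Local Notation queries_at := (queries_at min_alg V sched resp).
Local Notation in_consult := (in_consult min_alg V sched resp).
Local Notation stepin t p ev := (min_step p (state t p) (input_of resp (exe t).2 p ev)).

Lemma execS t : exe t.+1 =
  match sched t with
  | None => ((exe t).1, rcons (exe t).2 None)
  | Some (p, ev) => let so := stepin t p ev in
     ((fun q => if q == p then so.1 else (exe t).1 q), rcons (exe t).2 (Some (p, so.2)))
  end.
Proof. by rewrite /= /state; case: (exe t) => st outs /=; case: (sched t) => [[p ev]|]. Qed.

Lemma size_exec t : size (exe t).2 = t.
Proof.
elim: t => [//|t IH]; rewrite execS.
by case: (sched t) => [[p ev]|] /=; rewrite size_rcons IH.
Qed.

Lemma nth_exec t t0 : t0 < t -> nth None (exe t).2 t0 = out t0.
Proof.
elim: t => [//|t IH]; rewrite ltnS leq_eqVlt => /orP [/eqP ->|lt] //.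
by rewrite -IH // execS; case: (sched t) => [[p ev]|] /=; rewrite nth_rcons size_exec lt.
Qed.

Lemma outAtE t : out t =
  if sched t is Some (p, ev) then Some (p, (stepin t p ev).2) else None.
Proof.
rewrite /outAt execS.
by case: (sched t) => [[p ev]|] /=; rewrite nth_rcons size_exec ltnn eqxx.
Qed.

Lemma stateS t q : state t.+1 q =
  if sched t is Some (p, ev) then (if q == p then (stepin t p ev).1 else state t q)
  else state t q.
Proof. by rewrite /state execS; case: (sched t) => [[p ev]|]. Qed.

Lemma msg_ofE t t0 i p : t0 < t ->
  msg_of (exe t).2 t0 i p =
  if out t0 is Some (q, o) then
    if onth (sends o) i is Some (d, msg) then (if d == p then Some (q, msg) else None)
    else None
  else None.
Proof. by move=> lt; rewrite /msg_of nth_exec. Qed.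

Lemma init_val_state t p : init_val (state t p) = V p.
Proof.
elim: t p => [//|t IH] p; rewrite stateS.
by case: (sched t) => [[q ev]|] //; case: ifP => // /eqP ->; rewrite /= IH.
Qed.

Lemma nsteps_stateS t p : nsteps (state t.+1 p) =
  nsteps (state t p) + (if sched t is Some (q, _) then q == p else false).
Proof.
rewrite stateS; case: (sched t) => [[q ev]|]; last by rewrite addn0.
by rewrite eq_sym; case: eqP => [->|_] /=; rewrite ?addn1 ?addn0.
Qed.

Lemma nsteps_mono t t' p : t <= t' -> nsteps (state t p) <= nsteps (state t' p).
Proof.
move=> /subnK <-; elim: (t' - t) => [//|d IH]; rewrite addSn nsteps_stateS.
exact: leq_trans IH (leq_addr _ _).
Qed.

Lemma nqueriesE t p (j : 'I_N) : nqueries p j t = (j < nsteps (state t p)).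
Proof.
elim: t => [//|t IH] /=; rewrite IH nsteps_stateS outAtE.
case: (sched t) => [[q ev]|] /=; last by rewrite !addn0.
case: (q =P p) => [->|_] /=; last by rewrite !addn0.
case: (ltnP (nsteps (state t p)) N) => [lt|ge]; last first.
  by rewrite addn0 addn1 !(leq_trans (ltn_ord j)) // ltnW.
rewrite addn1 ltnS (leq_eqVlt j) -(inj_eq val_inj) /= inordK // eq_sym.
by case: ltngtP.
Qed.

Lemma queries_atE t p j b : queries_at t p j b -> nqueries p j t = 0 /\ b = V p.
Proof.
case=> o []; rewrite outAtE; case: (sched t) => [[q ev]|] //= [<- <-] /=.
by case: ltnP => // lt [<- <-]; rewrite nqueriesE init_val_state inordK // ltnn.
Qed.

Lemma in_consultE j c x b : in_consult j c x b -> c = 0 /\ b = V x.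
Proof. by case=> t0 [/queries_atE [-> ->] <-]. Qed.

Lemma nqueries_gt0 p j t : 0 < nqueries p j t ->
  exists t0 o b, out t0 = Some (p, o) /\ query o = Some (j, b).
Proof.
elim: t => [//|t IH] /=; case Eo: (out t) => [[q o]|]; last by rewrite addn0.
case: (q =P p) => [qp|_] /=; last by rewrite addn0.
case Eq: (query o) => [[j' b]|]; last by rewrite addn0.
case: (j' =P j) => [<- _|_]; last by rewrite addn0.
by exists t, o, b; rewrite -qp.
Qed.

Lemma known_stateS t p j e :
  known (state t p) j = Some e -> known (state t.+1 p) j = Some e.
Proof.
move=> kn_j; rewrite stateS; case: (sched t) => [[q ev]|] //.
by case: ifP => [/eqP <-|_] //; case: input_of => [|? [? ?]|? ?]; rewrite /= /learn ?kn_j.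
Qed.

Lemma known_mono t t' p j e : t <= t' ->
  known (state t p) j = Some e -> known (state t' p) j = Some e.
Proof.
by move=> /subnK <-; elim: (t' - t) => [//|d IH] kn_j; rewrite addSn; exact/known_stateS/IH.
Qed.

Lemma decision_mono t t' p b : t <= t' ->
  min_decision (state t p) = Some b -> min_decision (state t' p) = Some b.
Proof.
move=> le_tt'; rewrite /min_decision; case: ifP => // /forallP kn_all [<-].
have kn_eq j : known (state t' p) j = known (state t p) j.
  by move: (kn_all j); case E: known => [e|] // _; exact: known_mono E.
have -> : [forall j, known (state t' p) j != None] by apply/forallP => j; rewrite kn_eq.
by congr Some; apply: eq_forallb => j; rewrite kn_eq.
Qed.

Variables (F : fpattern N) (k f : nat).
Hypothesis adm : admissible (kTAg_task n k f) (fun j : 'I_N => lift j) min_alg F V sched resp.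

Lemma delivered_msg_sent t p t0 i : sched t = Some (p, EvMsg N t0 i) ->
  t0 < t /\ exists q o msg, out t0 = Some (q, o) /\ onth (sends o) i = Some (p, msg).
Proof. by case: adm => _ msg_ok _ _ _ /msg_ok[]. Qed.

Definition sound_answer j d :=
  d = resp j 0 /\ d \in kTAg k (lift_fpattern F j) (fun x => V (lift j x)).

Lemma response_sound t p j c : sched t = Some (p, EvResp j c) ->
  sound_answer j (resp j c).
Proof.
case: adm => _ _ _ resp_ok _ /resp_ok [[t0 [b [_ [q_t0 nq_t0]]]] _ valid].
have c0 : c = 0 by rewrite -nq_t0; case: (queries_atE q_t0).
rewrite c0 in valid *; split=> //.
by apply: valid => x b' /in_consultE [_ ->].
Qed.

Definition sent_sound t := forall t0 q o i r j d, t0 < t -> out t0 = Some (q, o) ->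
  onth (sends o) i = Some (r, (j, d)) -> sound_answer j d.

Definition known_sound t := forall p j d, known (state t p) j = Some d -> sound_answer j d.

Lemma input_sound t p ev : sent_sound t -> sched t = Some (p, ev) ->
  match input_of resp (exe t).2 p ev with
  | InResp j d | InMsg _ (j, d) => sound_answer j d
  | InNone => True
  end.
Proof.
move=> sent_ok; case: ev => [|t0 i|j c] sched_t //=.
  have [lt [q [o [[j d] [out_t0 sends_i]]]]] := delivered_msg_sent sched_t.
  by rewrite msg_ofE // out_t0 sends_i eqxx; exact: sent_ok lt out_t0 sends_i.
exact: response_sound sched_t.
Qed.

Lemma answers_sound t : sent_sound t /\ known_sound t.
Proof.
elim: t => [|t [sent_ok known_ok]]; first by [].
split.
  move=> t0 q o i r j d; rewrite ltnS leq_eqVlt => /orP [/eqP ->|]; last exact: sent_ok.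
  rewrite outAtE; case E: (sched t) => [[p ev]|] //= [_ <-] /=.
  move: (input_sound sent_ok E); case: input_of => [|? ?|j' d'] ok_jd /=; rewrite ?onth0n //.
  by rewrite onth_map; case: onth => //= ? [_ <- <-].
move=> p j d; rewrite stateS; case E: (sched t) => [[p' ev]|]; last exact: known_ok.
case: ifP => _; last exact: known_ok.
move: (input_sound sent_ok E); case: input_of => [|? [j' d']|j' d'] /= ok_in.
  exact: known_ok.
all: rewrite /learn; case kn_j: known => [e|]; first by move=> [<-]; exact: known_ok kn_j.
all: by case: eqP => // -> [<-].
Qed.

Lemma min_decision_sound t p b : min_decision (state t p) = Some b ->
  b = [forall j, resp j 0] /\ forall j, sound_answer j (resp j 0).
Proof.
rewrite /min_decision; case: ifP => // /forallP kn_all [<-].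
have kn_resp j : known (state t p) j = Some (resp j 0) /\ sound_answer j (resp j 0).
  move: (kn_all j); case E: known => [e|] // _.
  by have [_ /(_ _ _ _ E) [-> ok]] := answers_sound t.
by split=> [|j]; [apply: eq_forallb => j; rewrite (kn_resp j).1 | exact: (kn_resp j).2].
Qed.

Lemma nsteps_unbounded p c : correct F p -> exists t, c <= nsteps (state t p).
Proof.
case: adm => [[_ live] _ _ _ _] Cp; elim: c => [|c [t le_ct]]; first by exists 0.
have [t' [ev [le_tt' sched_t']]] := live p Cp t.
exists t'.+1; rewrite nsteps_stateS sched_t' eqxx addn1 ltnS.
exact: leq_trans le_ct (nsteps_mono p le_tt').
Qed.

Lemma correct_consults p j : correct F p -> in_consult j 0 p (V p).
Proof.
move=> Cp; have [t lt_jt] := nsteps_unbounded j.+1 Cp.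
have /nqueries_gt0 [t0 [o [b q_t0]]] : 0 < nqueries p j t by rewrite nqueriesE lt_jt.
have q_t0' : queries_at t0 p j b by exists o.
by have [nq0 b_val] := queries_atE q_t0'; exists t0; rewrite -b_val.
Qed.

Definition valid_for j c d := forall V' : 'I_n -> bool,
  (forall x b, in_consult j c (lift j x) b -> V' x = b) ->
  d \in kTAg k (lift_fpattern F j) V'.

(* [true] is valid when all queries are [1] and few consultants are faulty: the zeros of
   any extension are then at non-queriers, which are faulty since correct consultants
   do query.  Otherwise [false] is valid. *)
Lemma valid_for_exists j : 0 < k -> exists d, valid_for j 0 d.
Proof.
move=> k_gt0.
have [[queried1 few_faulty]|not_ones] := pselect
  ((forall x b, in_consult j 0 (lift j x) b -> b) /\
   #|Faulty (lift_fpattern F j)| <= k.-1).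
  exists true => V' ext; apply: contraT => /kTAg_trueN many_zeros.
  have : [set x | ~~ V' x] \subset Faulty (lift_fpattern F j).
    apply/subsetP => x; rewrite inE; apply: contraR => /correctP /correct_lift Cx.
    by have Q := correct_consults j Cx; rewrite (ext _ _ Q) (queried1 _ _ Q).
  move/subset_leq_card/(leq_trans many_zeros)/leq_trans/(_ few_faulty).
  by rewrite leqNgt ltn_predL k_gt0.
exists false => V' ext; apply: contraT => /kTAg_falseN [/forallP ones few_faulty].
by exfalso; apply: not_ones; split=> // x b Q; rewrite -(ext _ _ Q).
Qed.

Lemma response_broadcast t r j c p : sched t = Some (r, EvResp j c) ->
  exists o, out t = Some (r, o) /\
            onth (sends o) (index p (enum 'I_N)) = Some (p, (j, resp j c)).
Proof.
move=> sched_t; rewrite outAtE sched_t; eexists; split; first by [].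
by rewrite /= onth_map onth_index ?mem_enum.
Qed.

Lemma receipt_learns t p t0 i q o j d : sched t = Some (p, EvMsg N t0 i) ->
  out t0 = Some (q, o) -> onth (sends o) i = Some (p, (j, d)) ->
  known (state t.+1 p) j != None.
Proof.
move=> sched_t out_t0 sends_i; have [lt _] := delivered_msg_sent sched_t.
rewrite stateS sched_t eqxx /= msg_ofE // out_t0 sends_i eqxx /= /learn.
by case: known => //; rewrite eqxx.
Qed.

(* Oracle [j] has at least [n - f > 0] correct consultants; the answer delivered to
   any of them is relayed to [p]. *)
Lemma correct_learns p j : #|Faulty F| <= f -> f < n -> 0 < k ->
  correct F p -> exists t, known (state t p) j != None.
Proof.
move=> few_faulty lt_fn k_gt0 Cp.
pose S := ~: (lift j @^-1: Faulty F).
have S_correct x : x \in S -> correct F (lift j x) by rewrite in_setC inE => /correctP.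
have card_S : n - f <= #|S|.
  rewrite /S cardsCs setCK card_ord leq_sub2l //.
  exact: leq_trans (card_preimset_inj _ (@lift_inj N j)) few_faulty.
have [x x_S] : exists x, x \in S by apply/set0Pn; rewrite -card_gt0; lia.
have [t sched_t] : exists t, sched t = Some (lift j x, EvResp j 0).
  case: adm => _ _ _ _ /(_ j 0) live.
  apply: live (correct_consults j (S_correct x x_S)) (S_correct x x_S).
    exists S; split=> // y /S_correct Cy; exists (V (lift j y)).
    exact: correct_consults.
  exact: valid_for_exists.
have [o [out_t sends_p]] := response_broadcast p sched_t.
case: adm => _ _ reliable _ _; have [t' sched_t'] := reliable _ _ _ _ _ _ out_t sends_p Cp.
by exists t'.+1; exact: receipt_learns sched_t' out_t sends_p.
Qed.

Lemma correct_decides p : #|Faulty F| <= f -> f < n -> 0 < k ->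
  correct F p -> exists t b, min_decision (state t p) = Some b.
Proof.
move=> few_faulty lt_fn k_gt0 Cp.
have [tj known_tj] := choice (fun j => correct_learns j few_faulty lt_fn k_gt0 Cp).
exists (\max_j tj j); rewrite /min_decision.
have -> : [forall j, known (state (\max_j tj j) p) j != None].
  apply/forallP => j; move: (known_tj j); case kn_j: known => [e|] // _.
  by rewrite (known_mono _ kn_j) // leq_bigmax.
by eexists.
Qed.

End MinReduction.

Theorem mainTheorem8 (n f k : nat) :
  1 <= f <= n - 1 -> 1 <= k <= n ->
  Cstar_reducible (kTAg_task (n + 1) k f) (kTAg_task n k f).
Proof.
move=> f_bounds k_bounds; rewrite addn1.
have lt_fn : f < n by lia.
have k_gt0 : 0 < k by lia.
exists n.+1, (fun j => lift j); split; first by move=> j; exact: lift_inj.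
exists (min_alg n) => F V sched resp _ few_faulty adm /=.
have sound := min_decision_sound adm.
split.
- by move=> p; exact: correct_decides adm p few_faulty lt_fn k_gt0.
- by move=> p t t' b; exact: decision_mono.
- by move=> p q t t' b b' /sound [-> _] /sound [-> _].
- move=> p t b /sound [-> answers_ok].
  apply: kTAg_forall_lift => [|j]; first by rewrite k_gt0; lia.
  by case: (answers_ok j).
Qed.
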